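(* Let $\mathcal U$ be the quiver whose vertices are all finite ultrametric spaces and whose edges from $X=(X,d)$ to $Y=(Y,\rho)$ are all maps $f:X\to Y$ that are either isometries (metric-preserving bijections) or contractions. Then: (i) two finite ultrametric spaces are isotypic in $\mathcal U$ if and only if they are isometric; (ii) a finite ultrametric space is a primitive vertex of $\mathcal U$ if and only if it consists of a single point; (iii) the height in $\mathcal U$ of a finite ultrametric space $(X,d)$ equals the number of non-zero elements of the set $d(X\times X)\subset\mathbb R_+$; (iv) $\mathcal U$ is a phylogenetic quiver; (v) every vertex of $\mathcal U$ is regular.
   Context: A quiver consists of a class of vertices and, for each ordered pair of vertices $(A,B)$, a set of edges $A\to B$ (loops and multiple edges allowed). An evolution of length $m\ge 0$ is a sequence $A_0\leftarrow A_1\leftarrow\cdots\leftarrow A_m$ of vertices together with edges $A_k\to A_{k-1}$ ($1\le k\le m$); $A_0$ is its initial and $A_m$ its terminal vertex. Write $A\le B$ ($A$ is an ancestor of $B$, $B$ a descendant of $A$) if there is an evolution with initial vertex $A$ and terminal vertex $B$; $A,B$ are isotypic ($A\sim B$) if $A\le B$ and $B\le A$. A vertex $A$ is primitive if every ancestor of $A$ is isotypic to $A$. A full evolution for $X$ is an evolution with primitive initial vertex and terminal vertex $X$. The height $h(X)$ is the smallest length of a full evolution for $X$ ($h(X)=\infty$ if none exists). An evolution $\alpha=(A_0\leftarrow\cdots\leftarrow A_m)$ embeds in $\beta=(B_0\leftarrow\cdots\leftarrow B_n)$ if $m\le n$ and there are integers $0\le r_0<r_1<\cdots<r_m\le n$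 with $A_k\sim B_{r_k}$ for all $k$. A universal evolution for $X$ is a full evolution for $X$ that embeds in every full evolution for $X$; $X$ is phylogenetic if it has a universal evolution. A quiver is monotonous if $h(A)\ge h(B)$ for every edge $A\to B$; it is small if the isotypy classes of its vertices form a set; it is phylogenetic if it is small, monotonous, and all its vertices are phylogenetic. The clade $\mathcal O_A$ of a vertex $A$ is the quiver formed by all descendants of $A$ and all edges between them. A vertex $A$ is regular if for every $B$ in $\mathcal O_A$ with $h(B)=h(A)$ there is an edge $B\to A$. An ultrametric space is a metric space $(X,d)$ with $X\neq\emptyset$ and $d(x,y)\le\max(d(x,z),d(y,z))$ for all $x,y,z$. For $\varepsilon>0$, a map $f:(X,d)\to(Y,\rho)$ between metric spaces is an $\varepsilon$-contraction if $f(X)=Y$ and $\rho(f(x),f(y))=d(x,y)-\varepsilon$ for all distinct $x,y\in X$; a contraction is an $\varepsilon$-contraction for some $\varepsilon>0$. *)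

From Stdlib Require Import Reals List Arith ClassicalEpsilon.
Import ListNotations.
Open Scope R_scope.

Record quiver := Quiver {
  vtx : Type;
  edge : vtx -> vtx -> Type }.

Section QuiverNotions.
Variable Q : quiver.
Local Notation V := (vtx Q).

(* The evolution A0 <- A1 <- ... <- Am is encoded by A0 and l = [A1;...;Am];
   its length is m = length l, initial vertex A0, terminal vertex last l A0. *)
Definition evolution (A0 : V) (l : list V) : Prop :=
  forall (k : nat) (A B : V),
    nth_error (A0 :: l) k = Some A ->
    nth_error (A0 :: l) (S k) = Some B ->
    inhabited (edge Q B A).

Definition ancestor (A B : V) : Prop :=
  exists l, evolution A l /\ last l A = B.

Definition isotypic (A B : V) : Prop := ancestor A B /\ ancestor B A.

Definition primitive_vertex (A : V) : Prop := forall B, ancestor B A -> isotypic B A.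

Definition full_evolution (A0 : V) (l : list V) (X : V) : Prop :=
  evolution A0 l /\ primitive_vertex A0 /\ last l A0 = X.

Definition has_full_evolution_of_length (X : V) (n : nat) : Prop :=
  exists A0 l, full_evolution A0 l X /\ length l = n.

Definition is_height (X : V) (n : nat) : Prop :=
  has_full_evolution_of_length X n /\
  forall m, has_full_evolution_of_length X m -> (n <= m)%nat.

(* height: None stands for infinity *)
Definition height (X : V) : option nat :=
  match excluded_middle_informative (exists n, is_height X n) with
  | left H => Some (proj1_sig (constructive_indefinite_description _ H))
  | right _ => None
  end.

(* order on N u {infinity} (None = infinity) *)
Definition ext_le (a b : option nat) : Prop :=
  match a, b with
  | _, None => True
  | None, Some _ => False
  | Some x, Some y => (x <= y)%nat
  end.

Definition embeds (A0 : V) (l : list V) (B0 : V) (l' : list V) : Prop :=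
  (length l <= length l')%nat /\
  exists r : nat -> nat,
    (forall k, (k < length l)%nat -> (r k < r (S k))%nat) /\
    (r (length l) <= length l')%nat /\
    forall k, (k <= length l)%nat ->
      isotypic (nth k (A0 :: l) A0) (nth (r k) (B0 :: l') B0).

Definition universal_evolution (A0 : V) (l : list V) (X : V) : Prop :=
  full_evolution A0 l X /\
  forall B0 l', full_evolution B0 l' X -> embeds A0 l B0 l'.

Definition phylogenetic_vertex (X : V) : Prop :=
  exists A0 l, universal_evolution A0 l X.

Definition monotonous : Prop :=
  forall (A B : V) (e : edge Q A B), ext_le (height B) (height A).

(* isotypy classes form a set: they are indexed by a type in Set *)
Definition small : Prop :=
  exists (I : Set) (cls : V -> I), forall A B, isotypic A B <-> cls A = cls B.

Definition phylogenetic : Prop :=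
  small /\ monotonous /\ forall X, phylogenetic_vertex X.

(* B is in the clade of A iff A <= B; edges of the clade are those of Q *)
Definition regular (A : V) : Prop :=
  forall B, ancestor A B -> height B = height A -> inhabited (edge Q B A).

End QuiverNotions.

Record FUM := mkFUM {
  pt : Type;
  udist : pt -> pt -> R;
  fum_finite : exists l : list pt, forall x, In x l;
  fum_nonempty : inhabited pt;
  dist_nonneg : forall x y, 0 <= udist x y;
  dist_zero : forall x y, udist x y = 0 <-> x = y;
  dist_sym : forall x y, udist x y = udist y x;
  dist_ultra : forall x y z, udist x y <= Rmax (udist x z) (udist y z) }.

Definition is_isometry (X Y : FUM) (f : pt X -> pt Y) : Prop :=
  (forall x y, f x = f y -> x = y) /\ (forall y, exists x, f x = y) /\
  (forall x y, udist Y (f x) (f y) = udist X x y).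

Definition is_contraction (X Y : FUM) (f : pt X -> pt Y) : Prop :=
  exists eps : R, 0 < eps /\
    (forall y, exists x, f x = y) /\
    (forall x y, x <> y -> udist Y (f x) (f y) = udist X x y - eps).

Definition isometric (X Y : FUM) : Prop :=
  exists f : pt X -> pt Y, is_isometry X Y f.

Definition U_edge (X Y : FUM) : Type :=
  { f : pt X -> pt Y | is_isometry X Y f \/ is_contraction X Y f }.

Definition Uquiver : quiver := Quiver FUM U_edge.

From Pilot Require Import Defs.
From Stdlib Require Import Reals List Lra Lia Sorted Permutation.
From Stdlib Require Import ClassicalEpsilon FunctionalExtensionality PropExtensionality.
From Stdlib Require Import ProofIrrelevance.
Import ListNotations.
Open Scope R_scope.

(* Say that Z is the t-truncation of X if Z arises from X by gluing points at
   distance <= t and lowering every other distance by t.  Following an edge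
   backwards along an evolution adds to the truncation level (a contraction
   by eps adds eps, an isometry adds nothing), so every ancestor of X is a
   truncation of X, and the levels of an evolution A_0 <- ... <- A_m = X
   decrease from t_0 to t_m = 0 and, by ultrametricity, every distance of X
   below t_0 occurs as one of the levels.  Conversely, listing the distances
   v_0 > v_1 > ... > v_k = 0 of X, the truncations at consecutive v_i are
   joined by contractions, giving a full evolution starting at a point
   (the truncation at the diameter).  It embeds into every full evolution,
   because the latter starts at a point, hence at a level >= v_0, and so
   passes through a truncation at each level v_i.  Everything else follows:
   a space truncated by a positive amount onto itself is a point (isotypy is
   isometry), the height is k, and truncation can only decrease the number
   of nonzero distances (monotonicity, regularity). *)

Section Evolutions.
Variable Q : quiver.

Lemma evolution_nil (A : vtx Q) : evolution Q A [].
Proof. intros [|[|k]] B C _ HC; discriminate. Qed.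

Lemma evolution_cons (A0 A1 : vtx Q) l :
  evolution Q A0 (A1 :: l) <-> inhabited (edge Q A1 A0) /\ evolution Q A1 l.
Proof.
  split.
  - intros H. split; [exact (H O A0 A1 eq_refl eq_refl)|].
    intros k B C HB HC. exact (H (S k) B C HB HC).
  - intros [He Hl] [|k] B C HB HC.
    + injection HB as <-. injection HC as <-. exact He.
    + exact (Hl k B C HB HC).
Qed.

Lemma ancestor_of_edge (A B : vtx Q) : inhabited (edge Q B A) -> ancestor Q A B.
Proof.
  intros He. exists [B]. split; [|reflexivity].
  apply evolution_cons. split; [exact He|apply evolution_nil].
Qed.

Lemma height_of_is_height (X : vtx Q) n : is_height Q X n -> height Q X = Some n.
Proof.
  intros [Hn Hmin]. unfold height.
  destruct (excluded_middle_informative _) as [Hex|Hnone].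
  - destruct (constructive_indefinite_description _ Hex) as [m [Hm Hmmin]]; simpl.
    f_equal. apply Nat.le_antisymm; auto.
  - exfalso. apply Hnone. now exists n.
Qed.

Lemma height_of_universal (A0 : vtx Q) l X :
  universal_evolution Q A0 l X -> height Q X = Some (length l).
Proof.
  intros [Hfull Huniv]. apply height_of_is_height. split.
  - now exists A0, l.
  - intros m [B0 [l' [Hfull' <-]]]. apply (Huniv B0 l' Hfull').
Qed.

End Evolutions.

Lemma last_cons {A} (a d : A) l : last (a :: l) d = last l a.
Proof.
  revert a d. induction l as [|b l IH]; intros a d; [reflexivity|].
  change (last (b :: l) d = last (b :: l) a). now rewrite !IH.
Qed.

Lemma last_In {A} (a : A) l : In (last l a) (a :: l).
Proof.
  revert a. induction l as [|b l IH]; intros a; [now left|].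
  rewrite last_cons. right. apply IH.
Qed.

Lemma last_map {A B} (f : A -> B) l d : last (map f l) (f d) = f (last l d).
Proof.
  revert d. induction l as [|b l IH]; intros d; [reflexivity|].
  simpl map. rewrite !last_cons. apply IH.
Qed.

Lemma StronglySorted_nth {A} (Rel : A -> A -> Prop) l d i j :
  StronglySorted Rel l -> (i < j < length l)%nat -> Rel (nth i l d) (nth j l d).
Proof.
  intros Hs. revert i j. induction Hs as [|a l Hs IH Ha]; intros i j Hij; simpl in Hij; [lia|].
  destruct i as [|i], j as [|j]; try lia; simpl.
  - rewrite Forall_forall in Ha. apply Ha, nth_In. lia.
  - apply IH. lia.
Qed.

Lemma StronglySorted_Rgt_head_ge v vs r : StronglySorted Rgt (v :: vs) -> In r (v :: vs) -> r <= v.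
Proof.
  intros Hs [<-|Hr]; [lra|]. apply StronglySorted_inv in Hs as [_ Hv].
  rewrite Forall_forall in Hv. specialize (Hv r Hr). unfold Rgt in Hv. lra.
Qed.

Lemma StronglySorted_Rgt_last_le v vs r :
  StronglySorted Rgt (v :: vs) -> In r (v :: vs) -> last vs v <= r.
Proof.
  revert v r. induction vs as [|w vs IH]; intros v r Hs Hr.
  - destruct Hr as [<-|[]]. simpl. lra.
  - rewrite last_cons. pose proof (StronglySorted_Rgt_head_ge v (w :: vs) w Hs) as Hwv.
    apply StronglySorted_inv in Hs as [Hs _]. destruct Hr as [<-|Hr]; [|exact (IH w r Hs Hr)].
    pose proof (IH w w Hs (or_introl eq_refl)).
    pose proof (Hwv (or_intror (or_introl eq_refl))). lra.
Qed.

Lemma StronglySorted_Rgt_NoDup l : StronglySorted Rgt l -> NoDup l.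
Proof.
  induction 1 as [|a l _ IH Ha]; constructor; [|exact IH].
  rewrite Forall_forall in Ha. intros Hin. specialize (Ha a Hin). unfold Rgt in Ha. lra.
Qed.

Lemma exists_decreasing_listing (l : list R) :
  exists s, StronglySorted Rgt s /\ forall x, In x l <-> In x s.
Proof.
  induction l as [|a l [s [Hs Hin]]].
  - exists []. split; [constructor|tauto].
  - enough (Hins : exists s', StronglySorted Rgt s' /\ forall x, In x s' <-> a = x \/ In x s).
    { destruct Hins as [s' [Hs' Hin']]. exists s'. split; [exact Hs'|].
      intros x. rewrite Hin', <- Hin. reflexivity. }
    clear Hin. induction Hs as [|b s Hs IH Hb].
    + exists [a]. split; [repeat constructor|simpl; tauto].
    + destruct (total_order_T a b) as [[Hab|<-]|Hab].
      * destruct IH as [s' [Hs' Hin']]. exists (b :: s'). split.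
        -- constructor; [exact Hs'|]. apply Forall_forall. intros y Hy.
           apply Hin' in Hy as [<-|Hy]; [exact Hab|]. rewrite Forall_forall in Hb. auto.
        -- intros x. simpl. rewrite Hin'. tauto.
      * exists (a :: s). split; [constructor; assumption|simpl; tauto].
      * exists (a :: b :: s). split; [|simpl; tauto].
        constructor; [constructor; assumption|]. constructor; [exact Hab|].
        eapply Forall_impl; [|exact Hb]. unfold Rgt in *. intros; lra.
Qed.

Lemma increasing_reindexing (t : nat -> R) n (vals : list R) :
  (forall i j, (i <= j <= n)%nat -> t j <= t i) -> StronglySorted Rgt vals ->
  (forall a, In a vals -> exists j, (j <= n)%nat /\ t j = a) ->
  exists r : nat -> nat,
    (forall i, (S i < length vals)%nat -> (r i < r (S i))%nat) /\
    (length vals <= S n)%nat /\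
    (forall i, (i < length vals)%nat -> (r i <= n)%nat /\ t (r i) = nth i vals 0).
Proof.
  intros Hanti Hs Hhit.
  assert (Hex : forall i, exists j, (i < length vals)%nat -> (j <= n)%nat /\ t j = nth i vals 0).
  { intros i. destruct (Nat.lt_ge_cases i (length vals)) as [Hi|Hi]; [|exists O; lia].
    destruct (Hhit _ (nth_In vals 0 Hi)) as [j Hj]. exists j. now intros _. }
  destruct (choice _ Hex) as [r Hr].
  assert (Hincr : forall i, (S i < length vals)%nat -> (r i < r (S i))%nat).
  { intros i Hi. destruct (Hr i ltac:(lia)) as [Hri Eri], (Hr (S i) Hi) as [_ Ersi].
    pose proof (StronglySorted_nth Rgt vals 0 i (S i) Hs ltac:(lia)) as Hlt. unfold Rgt in Hlt.
    destruct (Nat.lt_ge_cases (r i) (r (S i))) as [|Hge]; [assumption|].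
    pose proof (Hanti (r (S i)) (r i) ltac:(lia)). lra. }
  assert (Hge : forall i, (i < length vals)%nat -> (i <= r i)%nat).
  { induction i as [|i IH]; intros Hi; [lia|].
    pose proof (IH ltac:(lia)). pose proof (Hincr i Hi). lia. }
  exists r. split; [exact Hincr|split; [|exact Hr]].
  destruct (length vals) as [|m] eqn:Hlen; [lia|].
  pose proof (Hge m ltac:(lia)). pose proof (proj1 (Hr m ltac:(lia))). lia.
Qed.

Definition surjective {A B} (f : A -> B) : Prop := forall b, exists a, f a = b.

Lemma surjective_comp {A B C} (f : A -> B) (g : B -> C) :
  surjective f -> surjective g -> surjective (fun a => g (f a)).
Proof. intros Hf Hg c. destruct (Hg c) as [b <-], (Hf b) as [a <-]. now exists a. Qed.

Lemma factor_through_surjective {A B C} (F : A -> B) (G : A -> C) :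
  surjective F -> (forall a a', F a = F a' -> G a = G a') ->
  exists h : B -> C, forall a, h (F a) = G a.
Proof.
  intros HF HG. destruct (choice _ HF) as [s Hs].
  exists (fun b => G (s b)). intros a. apply HG, Hs.
Qed.

Lemma udist_refl (X : FUM) x : udist X x x = 0.
Proof. now apply (dist_zero X). Qed.

Lemma udist_sym (X : FUM) x y : udist X x y = udist X y x.
Proof. apply Defs.dist_sym. Qed.

Definition singleton (X : FUM) : Prop := forall x y : pt X, x = y.

Lemma singleton_surjective_image (A B : FUM) (f : pt A -> pt B) :
  surjective f -> singleton A -> singleton B.
Proof. intros Hf HA b b'. destruct (Hf b) as [a <-], (Hf b') as [a' <-]. now rewrite (HA a a'). Qed.

Lemma isometric_of_common_cover (I : Type) (A B : FUM) (F : I -> pt A) (G : I -> pt B) :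
  surjective F -> surjective G ->
  (forall i j, udist B (G i) (G j) = udist A (F i) (F j)) -> isometric A B.
Proof.
  intros HF HG HD.
  assert (HFG : forall i j, F i = F j -> G i = G j).
  { intros i j E. apply (dist_zero B). rewrite HD, E. apply udist_refl. }
  destruct (factor_through_surjective F G HF HFG) as [h Hh].
  exists h. split; [|split].
  - intros x y E. destruct (HF x) as [i <-], (HF y) as [j <-]. rewrite !Hh in E.
    apply (dist_zero A). rewrite <- HD, E. apply udist_refl.
  - intros b. destruct (HG b) as [i <-]. exists (F i). apply Hh.
  - intros x y. destruct (HF x) as [i <-], (HF y) as [j <-]. rewrite !Hh. apply HD.
Qed.

Lemma isometric_sym A B : isometric A B -> isometric B A.
Proof.
  intros [f [_ [Hf Hd]]]. apply (isometric_of_common_cover (pt A) B A f (fun a => a)); auto.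
  intros a. now exists a.
Qed.

Lemma isometric_singletons A B : singleton A -> singleton B -> isometric A B.
Proof.
  intros HA HB. destruct (fum_nonempty A) as [a], (fum_nonempty B) as [b].
  apply (isometric_of_common_cover (pt A) A B (fun a => a) (fun _ => b)).
  - intros a'. now exists a'.
  - intros b'. exists a. apply HB.
  - intros i j. now rewrite (HA i j), !udist_refl.
Qed.

Definition is_distance (X : FUM) (r : R) : Prop := exists x y, udist X x y = r.

Lemma distance_listing X :
  exists v vs, StronglySorted Rgt (v :: vs) /\ forall r, In r (v :: vs) <-> is_distance X r.
Proof.
  destruct (fum_finite X) as [pts Hpts].
  destruct (exists_decreasing_listing (map (fun p => udist X (fst p) (snd p)) (list_prod pts pts)))
    as [s [Hs Hin]].
  assert (Hd : forall r, In r s <-> is_distance X r).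
  { intros r. rewrite <- Hin, in_map_iff. split.
    - intros [[x y] [<- _]]. now exists x, y.
    - intros [x [y <-]]. exists (x, y). split; [reflexivity|]. now apply in_prod. }
  destruct s as [|v vs].
  - exfalso. destruct (fum_nonempty X) as [x]. apply (proj2 (Hd 0)). exists x, x. apply udist_refl.
  - now exists v, vs.
Qed.

Section DistanceListing.
Variables (X : FUM) (v : R) (vs : list R).
Hypothesis listing_sorted : StronglySorted Rgt (v :: vs).
Hypothesis listing_spec : forall r, In r (v :: vs) <-> is_distance X r.

Lemma listing_nonneg r : In r (v :: vs) -> 0 <= r.
Proof. intros Hr. apply listing_spec in Hr as [x [y <-]]. apply dist_nonneg. Qed.

Lemma udist_le_listing_head x y : udist X x y <= v.
Proof.
  apply (StronglySorted_Rgt_head_ge v vs); [exact listing_sorted|].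
  apply listing_spec. now exists x, y.
Qed.

Lemma listing_last : last vs v = 0.
Proof.
  destruct (fum_nonempty X) as [x].
  assert (H0 : In 0 (v :: vs)) by (apply listing_spec; exists x, x; apply udist_refl).
  pose proof (StronglySorted_Rgt_last_le v vs 0 listing_sorted H0).
  pose proof (listing_nonneg _ (last_In v vs)). lra.
Qed.

End DistanceListing.

(** * Truncations *)

Definition truncation_map (X Z : FUM) (t : R) (F : pt X -> pt Z) : Prop :=
  surjective F /\ forall x y, udist Z (F x) (F y) = Rmax (udist X x y - t) 0.

Definition is_truncation (X Z : FUM) (t : R) : Prop := exists F, truncation_map X Z t F.

Lemma truncation_map_eq_iff X Z t F x y :
  truncation_map X Z t F -> F x = F y <-> udist X x y <= t.
Proof.
  intros [_ HF]. rewrite <- (dist_zero Z), HF. pose proof (Rmax_l (udist X x y - t) 0). split.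
  - intros E. lra.
  - intros Hle. apply Rmax_right. lra.
Qed.

Lemma truncation_nonneg X Z t : is_truncation X Z t -> 0 <= t.
Proof.
  intros [F HF]. destruct (fum_nonempty X) as [x].
  pose proof (proj1 (truncation_map_eq_iff X Z t F x x HF) eq_refl) as Hxx.
  now rewrite udist_refl in Hxx.
Qed.

Lemma truncation_refl X : is_truncation X X 0.
Proof.
  exists (fun x => x). split; [intros x; now exists x|].
  intros x y. rewrite Rminus_0_r, Rmax_left; [reflexivity|apply dist_nonneg].
Qed.

Lemma truncation_trans X Y Z s t :
  is_truncation X Y s -> is_truncation Y Z t -> is_truncation X Z (s + t).
Proof.
  intros HXY HYZ. pose proof (truncation_nonneg _ _ _ HYZ) as Ht.
  destruct HXY as [F [HF HdF]], HYZ as [G [HG HdG]].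
  exists (fun x => G (F x)). split; [now apply surjective_comp|].
  intros x y. rewrite HdG, HdF. unfold Rmax. repeat destruct Rle_dec; lra.
Qed.

Lemma truncation_isometric X Y Z t : is_truncation X Y t -> is_truncation X Z t -> isometric Y Z.
Proof.
  intros [F [HF HdF]] [G [HG HdG]]. apply (isometric_of_common_cover (pt X) Y Z F G HF HG).
  intros i j. now rewrite HdF, HdG.
Qed.

Lemma singleton_truncation_iff X Z t :
  is_truncation X Z t -> singleton Z <-> forall x y, udist X x y <= t.
Proof.
  intros [F HF]. split.
  - intros HZ x y. apply (truncation_map_eq_iff X Z t F x y HF), HZ.
  - intros Hdiam z z'. destruct (proj1 HF z) as [x <-], (proj1 HF z') as [y <-].
    apply (truncation_map_eq_iff X Z t F x y HF), Hdiam.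
Qed.

(* A diameter pair can only be the image of a pair at the same distance, which
   leaves no room for a positive truncation. *)
Lemma self_truncation_singleton X u : is_truncation X X u -> 0 < u -> singleton X.
Proof.
  intros [F [HF HdF]] Hu. destruct (distance_listing X) as [v [vs [Hs Hspec]]].
  pose proof (udist_le_listing_head X v vs Hs Hspec) as Hmax.
  destruct (proj1 (Hspec v) (or_introl eq_refl)) as [a [b Hab]].
  destruct (HF a) as [x <-], (HF b) as [y <-]. rewrite HdF in Hab.
  pose proof (Hmax x y). pose proof (dist_nonneg X x y).
  assert (Hv : v <= 0) by (revert Hab; unfold Rmax; destruct Rle_dec; lra).
  intros p q. apply (dist_zero X). pose proof (Hmax p q). pose proof (dist_nonneg X p q). lra.
Qed.

Section BallQuotient.
Variables (X : FUM) (t : R).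
Hypothesis t_nonneg : 0 <= t.
Local Notation d := (udist X).

Definition ball_center (x : pt X) : pt X := epsilon (inhabits x) (fun y => d x y <= t).

Lemma udist_ball_center x : d x (ball_center x) <= t.
Proof.
  apply (epsilon_spec (inhabits x) (fun y => d x y <= t)). exists x. now rewrite udist_refl.
Qed.

Lemma close_trans x y z : d x y <= t -> d y z <= t -> d x z <= t.
Proof.
  intros Hxy Hyz. pose proof (dist_ultra X x z y) as Hxz. rewrite (udist_sym X z y) in Hxz.
  unfold Rmax in Hxz. destruct Rle_dec; lra.
Qed.

Lemma ball_center_eq_iff x y : ball_center x = ball_center y <-> d x y <= t.
Proof.
  split.
  - intros E. apply (close_trans x (ball_center x) y); [apply udist_ball_center|].
    rewrite E, udist_sym. apply udist_ball_center.
  - intros Hxy. unfold ball_center.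
    assert (Eball : (fun z => d x z <= t) = (fun z => d y z <= t)).
    { apply functional_extensionality. intros z. apply propositional_extensionality.
      split; intros Hz; eapply close_trans; try eassumption; now rewrite udist_sym. }
    rewrite Eball. apply epsilon_inh_irrelevance. exists y. now rewrite udist_refl.
Qed.

Lemma ball_center_idem x : ball_center (ball_center x) = ball_center x.
Proof. apply ball_center_eq_iff. rewrite udist_sym. apply udist_ball_center. Qed.

Lemma truncated_udist_shift x x' y :
  d x x' <= t -> Rmax (d x' y - t) 0 = Rmax (d x y - t) 0.
Proof.
  intros Hxx'. pose proof (dist_ultra X x' y x). pose proof (dist_ultra X x y x').
  rewrite (udist_sym X x' x), (udist_sym X y x) in *. rewrite (udist_sym X y x') in *.
  unfold Rmax in *. repeat destruct Rle_dec; lra.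
Qed.

Definition qpt : Type := {x : pt X | ball_center x = x}.

Definition qdist (a b : qpt) : R := Rmax (d (proj1_sig a) (proj1_sig b) - t) 0.

Definition qcenter (x : pt X) : qpt := exist _ (ball_center x) (ball_center_idem x).

Lemma qcenter_surjective : surjective qcenter.
Proof. intros [x Hx]. exists x. now apply subset_eq_compat. Qed.

Lemma qpt_finite : exists l : list qpt, forall a, In a l.
Proof.
  destruct (fum_finite X) as [pts Hpts]. exists (map qcenter pts).
  intros a. destruct (qcenter_surjective a) as [x <-]. apply in_map, Hpts.
Qed.

Lemma qpt_nonempty : inhabited qpt.
Proof. destruct (fum_nonempty X) as [x]. exact (inhabits (qcenter x)). Qed.

Lemma qdist_nonneg a b : 0 <= qdist a b.
Proof. apply Rmax_r. Qed.

Lemma qdist_zero a b : qdist a b = 0 <-> a = b.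
Proof.
  destruct a as [x Hx], b as [y Hy]. unfold qdist; simpl. split.
  - intros E. apply subset_eq_compat. rewrite <- Hx, <- Hy. apply ball_center_eq_iff.
    pose proof (Rmax_l (d x y - t) 0). lra.
  - intros E. injection E as ->. rewrite udist_refl. apply Rmax_right. lra.
Qed.

Lemma qdist_sym a b : qdist a b = qdist b a.
Proof. unfold qdist. now rewrite udist_sym. Qed.

Lemma qdist_ultra a b c : qdist a b <= Rmax (qdist a c) (qdist b c).
Proof.
  unfold qdist. pose proof (dist_ultra X (proj1_sig a) (proj1_sig b) (proj1_sig c)).
  unfold Rmax in *. repeat destruct Rle_dec; lra.
Qed.

Definition ball_quotient : FUM :=
  mkFUM qpt qdist qpt_finite qpt_nonempty qdist_nonneg qdist_zero qdist_sym qdist_ultra.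

Lemma ball_quotient_truncation : is_truncation X ball_quotient t.
Proof.
  exists qcenter. split; [exact qcenter_surjective|]. intros x y. simpl. unfold qdist; simpl.
  rewrite (truncated_udist_shift x (ball_center x)) by apply udist_ball_center.
  rewrite udist_sym, (udist_sym X x y).
  apply truncated_udist_shift, udist_ball_center.
Qed.

End BallQuotient.

(* [truncate X t] is only meaningful for [t >= 0]; at [t = 0] it is [X] itself,
   which the chain of truncations must end with. *)
Definition truncate (X : FUM) (t : R) : FUM :=
  match Rlt_dec 0 t with
  | left Ht => ball_quotient X t (Rlt_le _ _ Ht)
  | right _ => X
  end.

Lemma truncate_truncation X t : 0 <= t -> is_truncation X (truncate X t) t.
Proof.
  intros Ht. unfold truncate. destruct (Rlt_dec 0 t) as [Hpos|Hnpos].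
  - apply ball_quotient_truncation.
  - replace t with 0 by lra. apply truncation_refl.
Qed.

Lemma truncate_zero X : truncate X 0 = X.
Proof. unfold truncate. destruct (Rlt_dec 0 0) as [H00|_]; [exfalso; lra|reflexivity]. Qed.

(** * Edges of the quiver and truncations *)

Lemma truncation_edge X Y Z s : is_truncation X Y s -> U_edge Y Z ->
  exists s', s <= s' /\ is_truncation X Z s' /\
    forall x y, udist X x y <= s \/ s' <= udist X x y.
Proof.
  intros [F HF] [f [[_ [Hf Hdf]]|[eps [Heps [Hf Hdf]]]]]; pose proof HF as [HFs HdF].
  - exists s. split; [lra|]. split.
    + exists (fun x => f (F x)). split; [now apply surjective_comp|]. intros x y. now rewrite Hdf.
    + intros x y. destruct (Rle_dec (udist X x y) s); [left|right]; lra.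
  - assert (Hfar : forall x y, s < udist X x y ->
              udist Z (f (F x)) (f (F y)) = udist X x y - s - eps).
    { intros x y Hxy. rewrite Hdf, HdF, Rmax_left; [lra|lra|].
      rewrite (truncation_map_eq_iff X Y s F x y HF). lra. }
    assert (Hgap : forall x y, s < udist X x y -> s + eps <= udist X x y).
    { intros x y Hxy. pose proof (dist_nonneg Z (f (F x)) (f (F y))) as Hnn.
      rewrite Hfar in Hnn; lra. }
    exists (s + eps). split; [lra|]. split.
    + exists (fun x => f (F x)). split; [now apply surjective_comp|]. intros x y.
      destruct (Rle_dec (udist X x y) s) as [Hle|Hgt].
      * rewrite (proj2 (truncation_map_eq_iff X Y s F x y HF) Hle), udist_refl.
        symmetry. apply Rmax_right. lra.
      * rewrite Hfar, Rmax_left; pose proof (Hgap x y); lra.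
    + intros x y. destruct (Rle_dec (udist X x y) s); [left; lra|right; apply Hgap; lra].
Qed.

Lemma edge_of_truncations X Y Z s t : is_truncation X Y s -> is_truncation X Z t -> s < t ->
  (forall x y, udist X x y <= s \/ t <= udist X x y) -> inhabited (U_edge Y Z).
Proof.
  intros [F HF] [G HG] Hst Hgap.
  assert (HFG : forall x y, F x = F y -> G x = G y).
  { intros x y E. apply (truncation_map_eq_iff X Z t G x y HG).
    apply (truncation_map_eq_iff X Y s F x y HF) in E. lra. }
  destruct (factor_through_surjective F G (proj1 HF) HFG) as [h Hh].
  constructor. exists h. right. exists (t - s). split; [lra|]. split.
  - intros z. destruct (proj1 HG z) as [x <-]. exists (F x). apply Hh.
  - intros a b Hab. destruct (proj1 HF a) as [x <-], (proj1 HF b) as [y <-].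
    rewrite !Hh, (proj2 HF), (proj2 HG).
    rewrite (truncation_map_eq_iff X Y s F x y HF) in Hab.
    destruct (Hgap x y) as [Hle|Hge]; [contradiction|]. rewrite !Rmax_left; lra.
Qed.

Lemma isotypic_of_isometric A B : isometric A B -> isotypic Uquiver A B.
Proof.
  intros HAB. split; apply ancestor_of_edge.
  - destruct (isometric_sym _ _ HAB) as [g Hg]. constructor. exists g. now left.
  - destruct HAB as [f Hf]. constructor. exists f. now left.
Qed.

Lemma evolution_levels (B0 : vtx Uquiver) l : evolution Uquiver B0 l ->
  exists t : nat -> R,
    (forall j B, nth_error (B0 :: l) j = Some B -> is_truncation (last l B0) B (t j)) /\
    (forall i j, (i <= j <= length l)%nat -> t j <= t i) /\
    (forall x y, udist (last l B0) x y <= t O ->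
       exists j, (j <= length l)%nat /\ t j = udist (last l B0) x y).
Proof.
  revert B0. induction l as [|B1 l IH]; intros B0 Hev.
  - exists (fun _ => 0). split; [|split].
    + intros [|[|j]] B HB; try discriminate. injection HB as <-. apply truncation_refl.
    + intros; lra.
    + intros x y Hxy. exists O. split; [lia|]. pose proof (dist_nonneg B0 x y). simpl in *. lra.
  - apply evolution_cons in Hev as [[e] Hev].
    destruct (IH B1 Hev) as [t [Htr [Hanti Hhit]]].
    rewrite last_cons. set (X := last l B1) in *.
    destruct (truncation_edge X B1 B0 (t O) (Htr O B1 eq_refl) e) as [s' [Hs' [Htr' Hgap]]].
    exists (fun j => match j with O => s' | S j => t j end). split; [|split].
    + intros [|j] B HB; [injection HB as <-; exact Htr'|exact (Htr j B HB)].
    + intros [|i] [|j] Hij; cbn [length] in Hij; try lia.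
      * lra.
      * pose proof (Hanti O j ltac:(lia)). lra.
      * apply Hanti. lia.
    + intros x y Hxy. destruct (Hgap x y) as [Hle|Hge].
      * destruct (Hhit x y Hle) as [j [Hj Ej]]. exists (S j). split; [cbn [length]; lia|exact Ej].
      * exists O. split; [lia|]. simpl in *. lra.
Qed.

Lemma ancestor_truncation A B : ancestor Uquiver A B -> exists t, is_truncation B A t.
Proof.
  intros [l [Hev <-]]. destruct (evolution_levels A l Hev) as [t [Htr _]].
  exists (t O). exact (Htr O A eq_refl).
Qed.

Lemma isometric_of_isotypic A B : isotypic Uquiver A B -> isometric A B.
Proof.
  intros [HAB HBA].
  destruct (ancestor_truncation A B HAB) as [t Ht], (ancestor_truncation B A HBA) as [u Hu].
  destruct (Req_dec t 0) as [->|Ht0].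
  - apply isometric_sym, (truncation_isometric B B A 0); [apply truncation_refl|exact Ht].
  - assert (HB : singleton B).
    { apply (self_truncation_singleton B (t + u)); [exact (truncation_trans _ _ _ _ _ Ht Hu)|].
      pose proof (truncation_nonneg _ _ _ Ht). pose proof (truncation_nonneg _ _ _ Hu). lra. }
    apply isometric_singletons; [|exact HB].
    destruct Ht as [F [HF _]]. exact (singleton_surjective_image B A F HF HB).
Qed.

Lemma isotypic_iff_isometric A B : isotypic Uquiver A B <-> isometric A B.
Proof. split; [apply isometric_of_isotypic|apply isotypic_of_isometric]. Qed.

Lemma singleton_primitive A : singleton A -> primitive_vertex Uquiver A.
Proof.
  intros HA B HBA. apply isotypic_of_isometric.
  destruct (ancestor_truncation B A HBA) as [t [F [HF _]]].
  apply isometric_singletons; [exact (singleton_surjective_image A B F HF HA)|exact HA].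
Qed.

(** * The chain of truncations at the distances *)

Lemma chain_evolution X v vs :
  StronglySorted Rgt (v :: vs) -> (forall r, In r (v :: vs) -> 0 <= r) ->
  (forall x y, udist X x y <= v -> In (udist X x y) (v :: vs)) ->
  evolution Uquiver (truncate X v) (map (truncate X) vs).
Proof.
  revert v. induction vs as [|w vs IH]; intros v Hs Hnn Hcov; [apply evolution_nil|].
  assert (Hwv : w < v) by (apply StronglySorted_inv in Hs as [_ Hv]; exact (Forall_inv Hv)).
  pose proof (StronglySorted_inv Hs) as [Hs' _].
  assert (Hcov' : forall x y, udist X x y <= w -> In (udist X x y) (w :: vs)).
  { intros x y Hxy. destruct (Hcov x y ltac:(lra)) as [E|Hin]; [lra|exact Hin]. }
  simpl. apply evolution_cons. split.
  - apply (edge_of_truncations X _ _ w v); try apply truncate_truncation; auto with datatypes.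
    intros x y. destruct (Rle_dec (udist X x y) w) as [Hle|Hgt]; [now left|right].
    destruct (Rle_dec v (udist X x y)) as [Hge|Hlt]; [exact Hge|exfalso].
    destruct (Hcov x y ltac:(lra)) as [E|Hin]; [lra|].
    apply Hgt, (StronglySorted_Rgt_head_ge w vs _ Hs' Hin).
  - apply IH; [exact Hs'|intros r Hr; apply Hnn; now right|exact Hcov'].
Qed.

Section ChainOfTruncations.
Variables (X : FUM) (v : R) (vs : list R).
Hypothesis listing_sorted : StronglySorted Rgt (v :: vs).
Hypothesis listing_spec : forall r, In r (v :: vs) <-> is_distance X r.

Lemma listing_head_singleton : singleton (truncate X v).
Proof.
  apply (singleton_truncation_iff X _ v).
  2: exact (udist_le_listing_head X v vs listing_sorted listing_spec).
  apply truncate_truncation, (listing_nonneg X v vs listing_spec). now left.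
Qed.

Lemma listing_chain_full : full_evolution Uquiver (truncate X v) (map (truncate X) vs) X.
Proof.
  split; [|split].
  - apply chain_evolution; [exact listing_sorted|exact (listing_nonneg X v vs listing_spec)|].
    intros x y _. apply listing_spec. now exists x, y.
  - apply singleton_primitive, listing_head_singleton.
  - now rewrite last_map, (listing_last X v vs listing_sorted listing_spec), truncate_zero.
Qed.

End ChainOfTruncations.

Lemma singleton_of_primitive X : primitive_vertex Uquiver X -> singleton X.
Proof.
  intros Hprim. destruct (distance_listing X) as [v [vs [Hs Hspec]]].
  destruct (listing_chain_full X v vs Hs Hspec) as [Hev [_ Hlast]].
  assert (Hanc : ancestor Uquiver (truncate X v) X) by now exists (map (truncate X) vs).
  destruct (isometric_of_isotypic _ _ (Hprim _ Hanc)) as [f [_ [Hf _]]].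
  exact (singleton_surjective_image _ _ f Hf (listing_head_singleton X v vs Hs Hspec)).
Qed.

(* Every full evolution of X starts at a point, so its first level dominates all
   distances of X, each of which therefore occurs as a level. *)
Lemma listing_chain_universal X v vs :
  StronglySorted Rgt (v :: vs) -> (forall r, In r (v :: vs) <-> is_distance X r) ->
  universal_evolution Uquiver (truncate X v) (map (truncate X) vs) X.
Proof.
  intros Hs Hspec. split; [exact (listing_chain_full X v vs Hs Hspec)|].
  intros B0 l [Hev [Hprim Hlast]].
  destruct (evolution_levels B0 l Hev) as [t [Htr [Hanti Hhit]]].
  rewrite Hlast in Htr, Hhit.
  assert (Hbig : forall x y, udist X x y <= t O).
  { apply (singleton_truncation_iff X B0); [exact (Htr O B0 eq_refl)|].
    exact (singleton_of_primitive B0 Hprim). }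
  assert (Hhit' : forall a, In a (v :: vs) -> exists j, (j <= length l)%nat /\ t j = a).
  { intros a Ha. apply Hspec in Ha as [x [y <-]]. exact (Hhit x y (Hbig x y)). }
  destruct (increasing_reindexing t (length l) (v :: vs) Hanti Hs Hhit') as [r [Hincr [Hlen Hr]]].
  cbn [length] in Hlen, Hr, Hincr.
  unfold embeds. rewrite length_map. split; [lia|].
  exists r. split; [intros k Hk; apply Hincr; lia|].
  split; [apply (Hr (length vs)); lia|].
  intros k Hk. destruct (Hr k ltac:(lia)) as [Hrk Erk].
  change (truncate X v :: map (truncate X) vs) with (map (truncate X) (v :: vs)).
  rewrite map_nth, (nth_indep _ v 0) by (simpl; lia).
  apply isotypic_of_isometric, (truncation_isometric X _ _ (t (r k))).
  - rewrite Erk. apply truncate_truncation, (listing_nonneg X v vs Hspec), nth_In. simpl; lia.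
  - apply Htr, nth_error_nth'. cbn [length]. lia.
Qed.

(** * Height, monotonicity and regularity *)

Lemma height_eq_nonzero_distances X l :
  NoDup l -> (forall r, In r l <-> r <> 0 /\ is_distance X r) -> height Uquiver X = Some (length l).
Proof.
  intros Hnd Hl. destruct (distance_listing X) as [v [vs [Hs Hspec]]].
  rewrite (height_of_universal _ _ _ _ (listing_chain_universal X v vs Hs Hspec)), length_map.
  assert (Hperm : Permutation (0 :: l) (v :: vs)).
  { apply NoDup_Permutation; [|now apply StronglySorted_Rgt_NoDup|].
    - constructor; [|exact Hnd]. intros H0. now apply Hl in H0.
    - intros r. rewrite Hspec. simpl. rewrite Hl. split.
      + intros [<-|[_ Hr]]; [|exact Hr].
        destruct (fum_nonempty X) as [x]. exists x, x. apply udist_refl.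
      + intros Hr. destruct (Req_dec 0 r); [now left|now right]. }
  apply Permutation_length in Hperm. simpl in Hperm. congruence.
Qed.

Lemma exists_nonzero_distances_height X : exists l, NoDup l /\
  (forall r, In r l <-> r <> 0 /\ is_distance X r) /\ height Uquiver X = Some (length l).
Proof.
  destruct (distance_listing X) as [v [vs [Hs Hspec]]].
  set (l := filter (fun r => if Req_dec_T r 0 then false else true) (v :: vs)).
  assert (Hnd : NoDup l) by apply NoDup_filter, StronglySorted_Rgt_NoDup, Hs.
  assert (Hl : forall r, In r l <-> r <> 0 /\ is_distance X r).
  { intros r. unfold l. rewrite filter_In, Hspec. destruct (Req_dec_T r 0); intuition congruence. }
  exists l. split; [exact Hnd|split; [exact Hl|]]. exact (height_eq_nonzero_distances X l Hnd Hl).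
Qed.

Definition Rltb (s r : R) : bool := if Rlt_dec s r then true else false.

(* The nonzero distances of the t-truncation are the distances r > t of X, shifted by t. *)
Lemma truncation_nonzero_distances_count A B t lA lB : is_truncation A B t ->
  (forall r, In r lA <-> r <> 0 /\ is_distance A r) ->
  NoDup lB -> (forall r, In r lB <-> r <> 0 /\ is_distance B r) ->
  (length lB <= length (filter (Rltb t) lA))%nat.
Proof.
  intros Htr HA HnB HB. pose proof (truncation_nonneg _ _ _ Htr) as Ht.
  destruct Htr as [F [HF HdF]].
  rewrite <- (length_map (fun r => r - t) (filter (Rltb t) lA)).
  apply NoDup_incl_length; [exact HnB|].
  intros r Hr. apply HB in Hr as [Hr0 [b1 [b2 <-]]].
  destruct (HF b1) as [x <-], (HF b2) as [y <-]. rewrite HdF in Hr0 |- *.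
  assert (Hgt : t < udist A x y).
  { destruct (Rle_dec (udist A x y - t) 0) as [Hle|]; [|lra].
    exfalso. apply Hr0, Rmax_right, Hle. }
  apply in_map_iff. exists (udist A x y). split; [rewrite Rmax_left; lra|].
  apply filter_In. split.
  - apply HA. split; [lra|now exists x, y].
  - unfold Rltb. now destruct (Rlt_dec t _).
Qed.

Lemma U_monotonous : monotonous Uquiver.
Proof.
  intros A B e. destruct (truncation_edge A A B 0 (truncation_refl A) e) as [s [_ [Hs _]]].
  destruct (exists_nonzero_distances_height A) as [lA [_ [HA ->]]],
           (exists_nonzero_distances_height B) as [lB [HnB [HB ->]]]. simpl.
  eapply Nat.le_trans; [exact (truncation_nonzero_distances_count A B s lA lB Hs HA HnB HB)|].
  apply filter_length_le.
Qed.

(* Equal heights leave no distance of B in ]0, t], so the truncation is a single contraction. *)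
Lemma U_regular A : regular Uquiver A.
Proof.
  intros B HAB Hh. destruct (ancestor_truncation A B HAB) as [t Ht].
  destruct (Req_dec t 0) as [->|Ht0].
  - destruct (truncation_isometric B B A 0 (truncation_refl B) Ht) as [f Hf].
    constructor. exists f. now left.
  - apply (edge_of_truncations B B A 0 t (truncation_refl B) Ht).
    { pose proof (truncation_nonneg _ _ _ Ht). lra. }
    destruct (exists_nonzero_distances_height A) as [lA [HnA [HA HhA]]],
             (exists_nonzero_distances_height B) as [lB [_ [HB HhB]]].
    rewrite HhA, HhB in Hh. injection Hh as Hlen.
    assert (Hall : forallb (Rltb t) lB = true).
    { apply filter_length_forallb. pose proof (filter_length_le (Rltb t) lB).
      pose proof (truncation_nonzero_distances_count B A t lB lA Ht HB HnA HA). lia. }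
    rewrite forallb_forall in Hall.
    intros x y. destruct (Req_dec (udist B x y) 0) as [E|E]; [left; lra|right].
    assert (Hin : In (udist B x y) lB) by (apply HB; split; [exact E|now exists x, y]).
    specialize (Hall _ Hin). unfold Rltb in Hall. destruct (Rlt_dec t _); [lra|discriminate].
Qed.

(** * Smallness *)

Definition realizes (X : FUM) (m : nat -> nat -> R) : Prop :=
  exists e : nat -> pt X, surjective e /\ forall i j, udist X (e i) (e j) = m i j.

Lemma realizes_exists X : exists m, realizes X m.
Proof.
  destruct (fum_finite X) as [pts Hpts], (fum_nonempty X) as [x0].
  exists (fun i j => udist X (nth i pts x0) (nth j pts x0)), (fun i => nth i pts x0).
  split; [|reflexivity]. intros x. destruct (In_nth pts x x0 (Hpts x)) as [i [_ Hi]]. now exists i.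
Qed.

Lemma realizes_isometric A B m : isometric A B -> realizes A m -> realizes B m.
Proof.
  intros [f [_ [Hf Hdf]]] [e [He Hde]]. exists (fun i => f (e i)).
  split; [now apply surjective_comp|]. intros i j. now rewrite Hdf.
Qed.

Lemma isometric_of_realizes A B m : realizes A m -> realizes B m -> isometric A B.
Proof.
  intros [eA [HA HdA]] [eB [HB HdB]]. apply (isometric_of_common_cover nat A B eA eB HA HB).
  intros i j. now rewrite HdA, HdB.
Qed.

(* The set of distance matrices of enumerations of X: an isometry invariant with values in a Set. *)
Definition realized_matrices (X : FUM) (m : nat -> nat -> R) : bool :=
  if excluded_middle_informative (realizes X m) then true else false.

Lemma U_small : small Uquiver.
Proof.
  exists ((nat -> nat -> R) -> bool), realized_matrices. intros A B.
  rewrite isotypic_iff_isometric. split.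
  - intros HAB. apply functional_extensionality. intros m. unfold realized_matrices.
    destruct (excluded_middle_informative (realizes A m)) as [HA|HA],
             (excluded_middle_informative (realizes B m)) as [HB|HB]; try reflexivity.
    + exfalso. exact (HB (realizes_isometric A B m HAB HA)).
    + exfalso. exact (HA (realizes_isometric B A m (isometric_sym _ _ HAB) HB)).
  - intros E. destruct (realizes_exists A) as [m Hm].
    pose proof (equal_f E m) as Em. unfold realized_matrices in Em.
    destruct (excluded_middle_informative (realizes A m)) as [_|HA]; [|contradiction].
    destruct (excluded_middle_informative (realizes B m)) as [HB|_]; [|discriminate].
    exact (isometric_of_realizes A B m Hm HB).
Qed.

Theorem mainTheorem1 :
  (forall X Y : FUM, isotypic Uquiver X Y <-> isometric X Y) /\
  (forall X : FUM, primitive_vertex Uquiver X <-> exists x : pt X, forall y, y = x) /\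
  (forall (X : FUM) (l : list R),
      NoDup l ->
      (forall r, In r l <-> (r <> 0 /\ exists x y, udist X x y = r)) ->
      height Uquiver X = Some (length l)) /\
  phylogenetic Uquiver /\
  (forall X : FUM, regular Uquiver X).
Proof.
  split; [exact isotypic_iff_isometric|].
  split; [|split; [exact height_eq_nonzero_distances|split; [|exact U_regular]]].
  - intros X. split.
    + intros Hprim. destruct (fum_nonempty X) as [x]. exists x.
      intros y. apply (singleton_of_primitive X Hprim).
    + intros [x Hx]. apply singleton_primitive. intros y z. now rewrite (Hx y), (Hx z).
  - split; [exact U_small|split; [exact U_monotonous|]].
    intros X. destruct (distance_listing X) as [v [vs [Hs Hspec]]].
    exists (truncate X v), (map (truncate X) vs). exact (listing_chain_universal X v vs Hs Hspec).
Qed.
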